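(* Let $n>1$, $I$ an index set, $S,T\in GL(n+1,\mathbb C)$, and for $r\in I$ let $P_r=S\,\mathrm{diag}\{p_{1r},\dots,p_{n+1,r}\}S^{-1}$, $Q_r=T\,\mathrm{diag}\{q_{1r},\dots,q_{n+1,r}\}T^{-1}$ (all entries nonzero), and assume that for every $r\in I$ the sets $\{\ln\frac{p_{kr}}{p_{n+1,r}}\}_{k=1}^n$ and $\{\ln\frac{q_{kr}}{q_{n+1,r}}\}_{k=1}^n$ are simple. There exists a biholomorphic map $f\colon\mathbb CP^n\to\mathbb CP^n$ with $f(P_rv)=Q_rf(v)$ for all $v\in\mathbb CP^n$, $r\in I$, if and only if there exists a permutation $\varrho$ of $\{1,\dots,n+1\}$ such that $\dfrac{q_{\varrho(k)r}}{q_{\varrho(n+1)r}}=\dfrac{p_{kr}}{p_{n+1,r}}$ for all $r\in I$, $k=1,\dots,n$.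
   Context: A matrix $P\in GL(n+1,\mathbb C)$ acts on $\mathbb CP^n$ by the induced projective transformation. $\ln$ is the principal branch. A set $\{\lambda_1,\dots,\lambda_n\}$ of nonzero complex numbers is simple if for all $k\neq l$, $\lambda_k/\lambda_l\notin\{s,1/s:s\in\mathbb N\}$. *)

From Stdlib Require Import Reals.
Open Scope R_scope.

Definition Cplx : Type := (R * R)%type.
Definition C0 : Cplx := (0, 0).
Definition C1 : Cplx := (1, 0).
Definition RtoC (x : R) : Cplx := (x, 0).
Definition Cadd (z w : Cplx) : Cplx := (fst z + fst w, snd z + snd w).
Definition Copp (z : Cplx) : Cplx := (- fst z, - snd z).
Definition Csub (z w : Cplx) : Cplx := Cadd z (Copp w).
Definition Cmul (z w : Cplx) : Cplx :=
  (fst z * fst w - snd z * snd w, fst z * snd w + snd z * fst w).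
Definition Cnorm2 (z : Cplx) : R := fst z * fst z + snd z * snd z.
Definition Cinv (z : Cplx) : Cplx := (fst z / Cnorm2 z, - snd z / Cnorm2 z).
Definition Cdiv (z w : Cplx) : Cplx := Cmul z (Cinv w).
Definition Cabs (z : Cplx) : R := sqrt (Cnorm2 z).

(** principal argument, with values in (-PI, PI] (the usual atan2) *)
Definition Arg (z : Cplx) : R :=
  let x := fst z in let y := snd z in
  if Rlt_dec 0 x then atan (y / x)
  else if Rlt_dec x 0 then
    (if Rle_dec 0 y then atan (y / x) + PI else atan (y / x) - PI)
  else if Rlt_dec 0 y then PI / 2
  else if Rlt_dec y 0 then - (PI / 2)
  else 0.

Definition Cln (z : Cplx) : Cplx := (ln (Cabs z), Arg z).

(** * Vectors and matrices of size N (indices 0 .. N-1) *)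
Definition vec : Type := nat -> Cplx.
Definition mat : Type := nat -> nat -> Cplx.

Fixpoint Csum (m : nat) (f : nat -> Cplx) : Cplx :=
  match m with O => C0 | S m' => Cadd (Csum m' f) (f m') end.
Fixpoint Rsumn (m : nat) (f : nat -> R) : R :=
  match m with O => 0 | S m' => Rsumn m' f + f m' end.

Definition mulmv (N : nat) (A : mat) (v : vec) : vec :=
  fun i => Csum N (fun k => Cmul (A i k) (v k)).
Definition mulmm (N : nat) (A B : mat) : mat :=
  fun i j => Csum N (fun k => Cmul (A i k) (B k j)).
Definition idm : mat := fun i j => if Nat.eqb i j then C1 else C0.
Definition diagm (d : vec) : mat := fun i j => if Nat.eqb i j then d i else C0.

Definition mat_inverse (N : nat) (A B : mat) : Prop :=
  forall i j, (i < N)%nat -> (j < N)%nat ->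
    mulmm N A B i j = idm i j /\ mulmm N B A i j = idm i j.

Definition conj_diag (N : nat) (S Sinv : mat) (d : vec) : mat :=
  mulmm N (mulmm N S (diagm d)) Sinv.

Definition vadd (v w : vec) : vec := fun k => Cadd (v k) (w k).
Definition vsub (v w : vec) : vec := fun k => Csub (v k) (w k).
Definition vnorm (N : nat) (v : vec) : R := Rsumn N (fun k => Cabs (v k)).

(** * Complex projective space CP^{N-1}: nonzero vectors up to scaling *)
Definition nonzero_vec (N : nat) (v : vec) : Prop :=
  exists k, (k < N)%nat /\ v k <> C0.
Definition proj_eq (N : nat) (v w : vec) : Prop :=
  exists l, l <> C0 /\ forall k, (k < N)%nat -> w k = Cmul l (v k).

(** F : vec -> vec is a lift of a well-defined self-map of CP^{N-1} *)
Definition proj_map (N : nat) (F : vec -> vec) : Prop :=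
  (forall v, nonzero_vec N v -> nonzero_vec N (F v)) /\
  (forall v w, nonzero_vec N v -> proj_eq N v w -> proj_eq N (F v) (F w)).

Definition C_differentiable_at (N : nat) (g : vec -> Cplx) (w : vec) : Prop :=
  exists a : vec, forall eps, eps > 0 -> exists delta, delta > 0 /\
    forall h, vnorm N h < delta ->
      Cabs (Csub (Csub (g (vadd w h)) (g w)) (Csum N (fun k => Cmul (a k) (h k))))
        <= eps * vnorm N h.

(** affine chart U_i = {v_i <> 0}: w |-> (w_0, .., 1 (at i), .., w_{N-1}) ;
    the i-th coordinate of w is a dummy variable *)
Definition chart_emb (i : nat) (w : vec) : vec :=
  fun k => if Nat.eqb k i then C1 else w k.

(** holomorphy of the induced map of CP^{N-1}: around every point, for every
    chart U_i at the point and chart U_j at its image, the map sends a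
    neighbourhood into U_j and its chart expression is holomorphic there *)
Definition holo_proj (N : nat) (F : vec -> vec) : Prop :=
  forall (v0 : vec) (i j : nat), (i < N)%nat -> (j < N)%nat ->
    v0 i <> C0 -> F v0 j <> C0 ->
    let w0 := fun k => Cdiv (v0 k) (v0 i) in
    exists delta, delta > 0 /\
      forall w, vnorm N (vsub w w0) < delta ->
        F (chart_emb i w) j <> C0 /\
        forall k, (k < N)%nat ->
          C_differentiable_at N
            (fun u => Cdiv (F (chart_emb i u) k) (F (chart_emb i u) j)) w.

(** F (and G) lift mutually inverse holomorphic self-maps of CP^{N-1} *)
Definition biholo_proj (N : nat) (F G : vec -> vec) : Prop :=
  proj_map N F /\ proj_map N G /\
  (forall v, nonzero_vec N v -> proj_eq N v (G (F v))) /\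
  (forall v, nonzero_vec N v -> proj_eq N v (F (G v))) /\
  holo_proj N F /\ holo_proj N G.

Definition simple_set (n : nat) (lam : nat -> Cplx) : Prop :=
  (forall k, (k < n)%nat -> lam k <> C0) /\
  forall k l, (k < n)%nat -> (l < n)%nat -> k <> l ->
    forall s : nat, (1 <= s)%nat ->
      Cdiv (lam k) (lam l) <> RtoC (INR s) /\
      Cdiv (lam k) (lam l) <> RtoC (/ INR s).

Definition is_perm (N : nat) (rho : nat -> nat) : Prop :=
  (forall k, (k < N)%nat -> (rho k < N)%nat) /\
  (forall k l, (k < N)%nat -> (l < N)%nat -> rho k = rho l -> k = l).

(* Sufficiency: with M the permutation matrix of rho, the linear map
   T M S^{-1} is biholomorphic and conjugates P_r to Q_r up to the scalar
   q_{rho(n) r} / p_{n r}.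

   Necessity: for j < n the line t |-> S(e_n + t e_j) is mapped by P_r into
   itself, by t |-> (p_j / p_n) t. Read the F-image of this line in the
   coordinates T^{-1}, normalised by a coordinate m that does not vanish at
   F(S e_n); intertwining makes the resulting curve y satisfy
   y(p_j / p_n t)_i = (q_i / q_m) y(t)_i, so its tangent vector A at t = 0
   satisfies A_i p_j / p_n = (q_i / q_m) A_i. A is nonzero, since otherwise
   G would map the image curve, whose tangent vanishes, back onto the line.
   Hence every p_j / p_n is some q_i / q_m, uniformly in r; sending j to such
   an i and n to m is injective because the ratios p_j / p_n are pairwise
   distinct and different from 1, which is all that simplicity is used for. *)

From Pilot Require Import Defs.
From Stdlib Require Import Reals Lra Lia Psatz Field.
From Stdlib Require Import Classical ClassicalEpsilon FunctionalExtensionality FinFun.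
Open Scope R_scope.

(* [Reals] and [Lra] also export constants named [C1] and [C0]. *)
Notation C0 := Defs.C0.
Notation C1 := Defs.C1.

(** * Complex numbers *)

Lemma Cext (z w : Cplx) : fst z = fst w -> snd z = snd w -> z = w.
Proof. destruct z, w; simpl; intros; subst; reflexivity. Qed.

Lemma Cnorm2_nonneg (z : Cplx) : 0 <= Cnorm2 z.
Proof. unfold Cnorm2; nra. Qed.

Lemma Cnorm2_pos (z : Cplx) : z <> C0 -> 0 < Cnorm2 z.
Proof.
  destruct z as [x y]; intro Hz; unfold Cnorm2; simpl.
  destruct (Req_dec x 0), (Req_dec y 0); subst; try nra.
  exfalso; apply Hz; reflexivity.
Qed.

Lemma Cfield_th : field_theory C0 C1 Cadd Cmul Csub Copp Cdiv Cinv (@eq Cplx).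
Proof.
  constructor.
  - constructor; intros; apply Cext; simpl; ring.
  - intro H; injection H; lra.
  - reflexivity.
  - intros [x y] Hz. pose proof (Cnorm2_pos _ Hz) as Hn. unfold Cnorm2 in Hn; simpl in Hn.
    apply Cext; simpl; unfold Cnorm2; simpl; field; lra.
Qed.

Add Field Cfield : Cfield_th.

Lemma C1_neq_C0 : C1 <> C0.
Proof. intro H; injection H; lra. Qed.

Lemma Cmul_neq0 (z w : Cplx) : z <> C0 -> w <> C0 -> Cmul z w <> C0.
Proof.
  intros Hz Hw H. apply Hz. replace z with (Cmul (Cmul z w) (Cinv w)) by (field; auto).
  rewrite H; ring.
Qed.

Lemma Cinv_neq0 (z : Cplx) : z <> C0 -> Cinv z <> C0.
Proof.
  intros Hz H. apply C1_neq_C0. replace C1 with (Cmul (Cinv z) z) by (field; auto).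
  rewrite H; ring.
Qed.

Lemma Cdiv_neq0 (z w : Cplx) : z <> C0 -> w <> C0 -> Cdiv z w <> C0.
Proof. intros; apply Cmul_neq0; auto; apply Cinv_neq0; auto. Qed.

Lemma Cabs_nonneg (z : Cplx) : 0 <= Cabs z.
Proof. apply sqrt_pos. Qed.

Lemma Cabs_C0 : Cabs C0 = 0.
Proof. unfold Cabs, Cnorm2; simpl. rewrite Rmult_0_l, Rplus_0_l. apply sqrt_0. Qed.

Lemma Cabs_pos (z : Cplx) : z <> C0 -> 0 < Cabs z.
Proof. intros Hz; apply sqrt_lt_R0, Cnorm2_pos, Hz. Qed.

Lemma Cabs_eq0 (z : Cplx) : Cabs z = 0 -> z = C0.
Proof.
  intros H. apply NNPP; intros Hz. pose proof (Cabs_pos z Hz); lra.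
Qed.

Lemma Cabs_mul (z w : Cplx) : Cabs (Cmul z w) = Cabs z * Cabs w.
Proof.
  unfold Cabs. rewrite <- sqrt_mult by apply Cnorm2_nonneg. f_equal.
  unfold Cnorm2, Cmul; simpl; ring.
Qed.

Lemma Cabs_opp (z : Cplx) : Cabs (Copp z) = Cabs z.
Proof. unfold Cabs; f_equal; unfold Cnorm2, Copp; simpl; ring. Qed.

Lemma Cabs_triangle (z w : Cplx) : Cabs (Cadd z w) <= Cabs z + Cabs w.
Proof.
  destruct z as [x y], w as [u v]; unfold Cabs, Cnorm2, Cadd; simpl.
  assert (Ha : 0 <= x * x + y * y) by nra. assert (Hb : 0 <= u * u + v * v) by nra.
  pose proof (sqrt_sqrt _ Ha); pose proof (sqrt_sqrt _ Hb).
  pose proof (sqrt_pos (x * x + y * y)); pose proof (sqrt_pos (u * u + v * v)).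
  apply Rsqr_incr_0_var; [|lra]. rewrite Rsqr_sqrt by (apply Rplus_le_le_0_compat; apply Rle_0_sqr). unfold Rsqr.
  (* Cauchy-Schwarz, from the Lagrange identity *)
  assert (x * u + y * v <= sqrt (x * x + y * y) * sqrt (u * u + v * v)).
  { rewrite <- sqrt_mult by assumption.
    destruct (Rle_lt_dec (x * u + y * v) 0); [pose proof (sqrt_pos ((x * x + y * y) * (u * u + v * v))); lra|].
    rewrite <- (sqrt_Rsqr (x * u + y * v)) by lra. apply sqrt_le_1_alt.
    pose proof (Rle_0_sqr (x * v - y * u)). unfold Rsqr in *. nra. }
  nra.
Qed.

Lemma Cabs_sub_triangle (z w : Cplx) : Cabs (Csub z w) <= Cabs z + Cabs w.
Proof. rewrite <- (Cabs_opp w). apply Cabs_triangle. Qed.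

Lemma Cabs_rev_triangle (z w : Cplx) : Cabs z - Cabs w <= Cabs (Cadd z w).
Proof.
  pose proof (Cabs_sub_triangle (Cadd z w) w).
  replace (Csub (Cadd z w) w) with z in H by ring. lra.
Qed.

Lemma Cabs_inv (z : Cplx) : z <> C0 -> Cabs (Cinv z) = / Cabs z.
Proof.
  intros Hz. pose proof (Cabs_pos z Hz).
  assert (E : Cabs (Cinv z) * Cabs z = 1).
  { rewrite <- Cabs_mul. replace (Cmul (Cinv z) z) with C1 by (field; auto).
    unfold Cabs, Cnorm2; simpl. rewrite Rmult_1_l, Rmult_0_l, Rplus_0_r. apply sqrt_1. }
  apply (Rmult_eq_reg_r (Cabs z)); [|lra]. rewrite E. field. lra.
Qed.

Lemma Cabs_RtoC (x : R) : Cabs (RtoC x) = Rabs x.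
Proof.
  unfold Cabs, Cnorm2, RtoC; simpl. rewrite Rmult_0_l, Rplus_0_r. apply sqrt_Rsqr_abs.
Qed.

(** * Finite sums and matrices *)

Lemma Csum_ext (m : nat) (f g : nat -> Cplx) :
  (forall k, (k < m)%nat -> f k = g k) -> Csum m f = Csum m g.
Proof.
  induction m; intros H; simpl; auto.
  rewrite IHm by (intros; apply H; lia). rewrite H by lia. reflexivity.
Qed.

Lemma Csum_add (m : nat) (f g : nat -> Cplx) :
  Csum m (fun k => Cadd (f k) (g k)) = Cadd (Csum m f) (Csum m g).
Proof. induction m; simpl; [ring|]. rewrite IHm; ring. Qed.

Lemma Csum_sub (m : nat) (f g : nat -> Cplx) :
  Csum m (fun k => Csub (f k) (g k)) = Csub (Csum m f) (Csum m g).
Proof. induction m; simpl; [ring|]. rewrite IHm; ring. Qed.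

Lemma Csum_mull (m : nat) (c : Cplx) (f : nat -> Cplx) :
  Csum m (fun k => Cmul c (f k)) = Cmul c (Csum m f).
Proof. induction m; simpl; [ring|]. rewrite IHm; ring. Qed.

Lemma Csum_mulr (m : nat) (c : Cplx) (f : nat -> Cplx) :
  Csum m (fun k => Cmul (f k) c) = Cmul (Csum m f) c.
Proof. induction m; simpl; [ring|]. rewrite IHm; ring. Qed.

Lemma Csum_zero (m : nat) (f : nat -> Cplx) :
  (forall k, (k < m)%nat -> f k = C0) -> Csum m f = C0.
Proof.
  induction m; intros H; simpl; auto.
  rewrite IHm by (intros; apply H; lia). rewrite H by lia. ring.
Qed.

Lemma Csum_single (m : nat) (f : nat -> Cplx) (k0 : nat) : (k0 < m)%nat ->
  (forall k, (k < m)%nat -> k <> k0 -> f k = C0) -> Csum m f = f k0.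
Proof.
  induction m; intros Hk H; [lia|]. simpl.
  destruct (Nat.eq_dec k0 m) as [->|Hne].
  - rewrite Csum_zero by (intros; apply H; lia). ring.
  - rewrite IHm by (lia || intros; apply H; lia). rewrite (H m) by lia. ring.
Qed.

Lemma Csum_exchange (m n : nat) (f : nat -> nat -> Cplx) :
  Csum m (fun i => Csum n (fun j => f i j)) = Csum n (fun j => Csum m (fun i => f i j)).
Proof.
  induction m; simpl.
  - rewrite Csum_zero; auto.
  - rewrite IHm, <- Csum_add. reflexivity.
Qed.

Lemma Rsumn_le (m : nat) (f g : nat -> R) :
  (forall k, (k < m)%nat -> f k <= g k) -> Rsumn m f <= Rsumn m g.
Proof.
  induction m; intros H; simpl; [lra|].
  pose proof (IHm ltac:(intros; apply H; lia)). pose proof (H m ltac:(lia)). lra.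
Qed.

Lemma Rsumn_const (m : nat) (c : R) : Rsumn m (fun _ => c) = INR m * c.
Proof. induction m; simpl Rsumn; [simpl; ring|]. rewrite IHm, S_INR; ring. Qed.

Lemma Rsumn_nonneg (m : nat) (f : nat -> R) :
  (forall k, (k < m)%nat -> 0 <= f k) -> 0 <= Rsumn m f.
Proof.
  intros H. replace 0 with (Rsumn m (fun _ => 0)) by (rewrite Rsumn_const; ring).
  apply Rsumn_le, H.
Qed.

Lemma Rsumn_mull (m : nat) (c : R) (f : nat -> R) :
  Rsumn m (fun k => c * f k) = c * Rsumn m f.
Proof. induction m; simpl; [ring|]. rewrite IHm; ring. Qed.

Lemma Rsumn_term (m : nat) (f : nat -> R) (k : nat) : (k < m)%nat ->
  (forall j, (j < m)%nat -> 0 <= f j) -> f k <= Rsumn m f.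
Proof.
  induction m; intros Hk H; [lia|]. simpl.
  destruct (Nat.eq_dec k m) as [->|Hne].
  - pose proof (Rsumn_nonneg m f ltac:(intros; apply H; lia)). lra.
  - pose proof (IHm ltac:(lia) ltac:(intros; apply H; lia)). pose proof (H m ltac:(lia)). lra.
Qed.

Lemma Cabs_Csum (m : nat) (f : nat -> Cplx) : Cabs (Csum m f) <= Rsumn m (fun k => Cabs (f k)).
Proof.
  induction m; simpl; [rewrite Cabs_C0; lra|].
  pose proof (Cabs_triangle (Csum m f) (f m)). lra.
Qed.

Lemma vnorm_nonneg (N : nat) (h : vec) : 0 <= vnorm N h.
Proof. apply Rsumn_nonneg; intros; apply Cabs_nonneg. Qed.

Lemma vnorm_eq0 (N : nat) (h : vec) : (forall k, (k < N)%nat -> h k = C0) -> vnorm N h = 0.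
Proof.
  intros H. apply Rle_antisym; [|apply vnorm_nonneg].
  replace 0 with (Rsumn N (fun _ => 0)) by (rewrite Rsumn_const; ring).
  apply Rsumn_le. intros k Hk. rewrite H, Cabs_C0 by auto. lra.
Qed.

Lemma Cabs_le_vnorm (N : nat) (h : vec) (k : nat) : (k < N)%nat -> Cabs (h k) <= vnorm N h.
Proof. intros Hk. apply (Rsumn_term N (fun k => Cabs (h k))); auto. intros; apply Cabs_nonneg. Qed.

Lemma Cabs_linear_form_le (N : nat) (a h : vec) :
  Cabs (Csum N (fun k => Cmul (a k) (h k))) <= Rsumn N (fun k => Cabs (a k)) * vnorm N h.
Proof.
  eapply Rle_trans; [apply Cabs_Csum|].
  rewrite Rmult_comm, <- Rsumn_mull. apply Rsumn_le. intros k Hk.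
  rewrite Cabs_mul, Rmult_comm. apply Rmult_le_compat_r; [apply Cabs_nonneg|].
  apply Cabs_le_vnorm; auto.
Qed.

Lemma mulmv_ext (N : nat) (A : mat) (v w : vec) :
  (forall k, (k < N)%nat -> v k = w k) -> mulmv N A v = mulmv N A w.
Proof. intros H; extensionality i; apply Csum_ext; intros; rewrite H; auto. Qed.

Lemma mulmv_mulmm (N : nat) (A B : mat) (v : vec) :
  mulmv N (mulmm N A B) v = mulmv N A (mulmv N B v).
Proof.
  extensionality i. unfold mulmv, mulmm.
  transitivity (Csum N (fun k => Csum N (fun l => Cmul (A i l) (Cmul (B l k) (v k))))).
  - apply Csum_ext; intros. rewrite <- Csum_mulr. apply Csum_ext; intros; ring.
  - rewrite Csum_exchange. apply Csum_ext; intros. apply Csum_mull.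
Qed.

Lemma mulmv_mull (N : nat) (A : mat) (c : Cplx) (v : vec) :
  mulmv N A (fun k => Cmul c (v k)) = fun i => Cmul c (mulmv N A v i).
Proof. extensionality i; unfold mulmv. rewrite <- Csum_mull. apply Csum_ext; intros; ring. Qed.

Lemma mulmv_diagm (N : nat) (d v : vec) (i : nat) : (i < N)%nat ->
  mulmv N (diagm d) v i = Cmul (d i) (v i).
Proof.
  intros Hi. unfold mulmv, diagm. rewrite (Csum_single N _ i Hi), Nat.eqb_refl; [reflexivity|].
  intros k Hk Hne. destruct (Nat.eqb_spec i k); [lia|]. ring.
Qed.

Lemma mulmv_idm (N : nat) (v : vec) (i : nat) : (i < N)%nat -> mulmv N idm v i = v i.
Proof.
  intros Hi. unfold mulmv, idm. rewrite (Csum_single N _ i Hi), Nat.eqb_refl; [ring|].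
  intros k Hk Hne. destruct (Nat.eqb_spec i k); [lia|]. ring.
Qed.

Lemma mulmv_inv_l (N : nat) (A B : mat) (v : vec) (i : nat) : mat_inverse N A B ->
  (i < N)%nat -> mulmv N B (mulmv N A v) i = v i.
Proof.
  intros H Hi. rewrite <- mulmv_mulmm, <- (mulmv_idm N v i Hi).
  apply Csum_ext; intros. rewrite (proj2 (H i k Hi H0)). reflexivity.
Qed.

Lemma mulmv_inv_r (N : nat) (A B : mat) (v : vec) (i : nat) : mat_inverse N A B ->
  (i < N)%nat -> mulmv N A (mulmv N B v) i = v i.
Proof.
  intros H Hi. rewrite <- mulmv_mulmm, <- (mulmv_idm N v i Hi).
  apply Csum_ext; intros. rewrite (proj1 (H i k Hi H0)). reflexivity.
Qed.

Lemma mulmv_nonzero (N : nat) (A B : mat) (v : vec) :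
  (forall k, (k < N)%nat -> mulmv N B (mulmv N A v) k = v k) ->
  nonzero_vec N v -> nonzero_vec N (mulmv N A v).
Proof.
  intros HBA [k [Hk Hv]]. apply NNPP; intros Hz. apply Hv. rewrite <- (HBA k Hk).
  unfold mulmv at 1. apply Csum_zero. intros l Hl.
  replace (mulmv N A v l) with C0; [ring|].
  apply NNPP; intros Hl'. apply Hz. exists l; auto.
Qed.

Lemma mulmv_conj_diag (N : nat) (A B : mat) (d v : vec) :
  mulmv N (conj_diag N A B d) v = mulmv N A (fun k => Cmul (d k) (mulmv N B v k)).
Proof. unfold conj_diag. rewrite !mulmv_mulmm. apply mulmv_ext. intros; apply mulmv_diagm; auto. Qed.

Lemma mulmv_inv_conj_diag (N : nat) (A B : mat) (d w : vec) (i : nat) :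
  mat_inverse N A B -> (i < N)%nat ->
  mulmv N B (mulmv N (conj_diag N A B d) w) i = Cmul (d i) (mulmv N B w i).
Proof. intros H Hi. rewrite mulmv_conj_diag. apply mulmv_inv_l; auto. Qed.

Lemma mulmv_div (N : nat) (A : mat) (v : vec) (c : Cplx) (i : nat) :
  mulmv N A (fun k => Cdiv (v k) c) i = Cdiv (mulmv N A v i) c.
Proof. unfold mulmv, Cdiv at 2. rewrite <- Csum_mulr. apply Csum_ext; intros; unfold Cdiv; ring. Qed.

(** * Derivatives at 0 *)

Definition near0 (P : Cplx -> Prop) : Prop :=
  exists d, d > 0 /\ forall t, Cabs t < d -> P t.

Lemma near0_all (P : Cplx -> Prop) : (forall t, P t) -> near0 P.
Proof. intros H; exists 1; split; [lra|]; auto. Qed.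

Lemma near0_ball (e : R) : e > 0 -> near0 (fun t => Cabs t < e).
Proof. intros; exists e; split; auto. Qed.

Lemma near0_at0 (P : Cplx -> Prop) : near0 P -> P C0.
Proof. intros [d [Hd H]]; apply H; rewrite Cabs_C0; lra. Qed.

Lemma near0_impl (P Q : Cplx -> Prop) : (forall t, P t -> Q t) -> near0 P -> near0 Q.
Proof. intros H [d [Hd HP]]; exists d; split; auto. Qed.

Lemma near0_and (P Q : Cplx -> Prop) : near0 P -> near0 Q -> near0 (fun t => P t /\ Q t).
Proof.
  intros [d1 [H1 P1]] [d2 [H2 P2]]. exists (Rmin d1 d2). split; [apply Rmin_Rgt_r; auto|].
  intros t Ht. pose proof (Rmin_l d1 d2); pose proof (Rmin_r d1 d2).
  split; [apply P1|apply P2]; lra.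
Qed.

Lemma near0_forall_lt (m : nat) (P : nat -> Cplx -> Prop) :
  (forall k, (k < m)%nat -> near0 (P k)) -> near0 (fun t => forall k, (k < m)%nat -> P k t).
Proof.
  induction m; intros H.
  - apply near0_all; intros; lia.
  - apply (near0_impl (fun t => (forall k, (k < m)%nat -> P k t) /\ P m t)).
    + intros t [Hlt Hm] k Hk. destruct (Nat.eq_dec k m) as [->|]; auto. apply Hlt; lia.
    + apply near0_and; [apply IHm; intros; apply H|apply H]; lia.
Qed.

Lemma near0_scale (P : Cplx -> Prop) (d : Cplx) : near0 P -> near0 (fun t => P (Cmul d t)).
Proof.
  intros [del [Hd H]]. pose proof (Cabs_nonneg d).
  exists (del / (Cabs d + 1)). split; [apply Rdiv_lt_0_compat; lra|].
  intros t Ht. apply H. rewrite Cabs_mul. pose proof (Cabs_nonneg t).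
  apply Rle_lt_trans with ((Cabs d + 1) * Cabs t); [nra|].
  apply Rlt_le_trans with ((Cabs d + 1) * (del / (Cabs d + 1))).
  - apply Rmult_lt_compat_l; lra.
  - right; field; lra.
Qed.

Definition littleo0 (r : Cplx -> Cplx) : Prop :=
  forall eps, eps > 0 -> near0 (fun t => Cabs (r t) <= eps * Cabs t).

Definition tends0 (r : Cplx -> Cplx) : Prop :=
  forall eps, eps > 0 -> near0 (fun t => Cabs (r t) <= eps).

Definition bounded0 (r : Cplx -> Cplx) : Prop :=
  exists K, near0 (fun t => Cabs (r t) <= K).

Lemma littleo0_near (r s : Cplx -> Cplx) :
  near0 (fun t => r t = s t) -> littleo0 r -> littleo0 s.
Proof.
  intros He Hr eps Heps. eapply near0_impl; [|apply (near0_and _ _ He (Hr eps Heps))].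
  intros t [E H]; rewrite <- E; auto.
Qed.

Lemma littleo0_ext (r s : Cplx -> Cplx) : (forall t, r t = s t) -> littleo0 r -> littleo0 s.
Proof. intros H; apply littleo0_near, near0_all, H. Qed.

Lemma littleo0_zero : littleo0 (fun _ => C0).
Proof.
  intros eps He; apply near0_all; intros t. rewrite Cabs_C0.
  pose proof (Cabs_nonneg t); nra.
Qed.

Lemma littleo0_add (r s : Cplx -> Cplx) :
  littleo0 r -> littleo0 s -> littleo0 (fun t => Cadd (r t) (s t)).
Proof.
  intros Hr Hs eps Heps.
  eapply near0_impl; [|apply (near0_and _ _ (Hr (eps/2) ltac:(lra)) (Hs (eps/2) ltac:(lra)))].
  intros t [A B]. eapply Rle_trans; [apply Cabs_triangle|]. lra.
Qed.

Lemma littleo0_mul_bounded (r s : Cplx -> Cplx) :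
  littleo0 r -> bounded0 s -> littleo0 (fun t => Cmul (r t) (s t)).
Proof.
  intros Hr [K HK] eps Heps. set (K' := Rabs K + 1).
  assert (HK' : K' > 0) by (unfold K'; pose proof (Rabs_pos K); lra).
  eapply near0_impl; [|apply (near0_and _ _ (Hr (eps / K') ltac:(apply Rdiv_lt_0_compat; lra)) HK)].
  intros t [A B]. rewrite Cabs_mul.
  assert (Cabs (s t) <= K') by (unfold K'; pose proof (Rle_abs K); lra).
  pose proof (Cabs_nonneg (r t)); pose proof (Cabs_nonneg (s t)); pose proof (Cabs_nonneg t).
  apply Rle_trans with (eps / K' * Cabs t * K'); [apply Rmult_le_compat; auto|].
  right; field; lra.
Qed.

Lemma bounded0_const (c : Cplx) : bounded0 (fun _ => c).
Proof. exists (Cabs c); apply near0_all; intros; lra. Qed.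

Lemma littleo0_mull (c : Cplx) (r : Cplx -> Cplx) :
  littleo0 r -> littleo0 (fun t => Cmul c (r t)).
Proof.
  intros Hr. apply (littleo0_ext (fun t => Cmul (r t) c)); [intros; ring|].
  apply littleo0_mul_bounded; auto. apply bounded0_const.
Qed.

Lemma littleo0_Csum (m : nat) (r : nat -> Cplx -> Cplx) :
  (forall k, (k < m)%nat -> littleo0 (r k)) -> littleo0 (fun t => Csum m (fun k => r k t)).
Proof.
  induction m; intros H; simpl; [apply littleo0_zero|].
  apply (littleo0_add (fun t => Csum m (fun k => r k t)) (r m)); [apply IHm; intros|]; apply H; lia.
Qed.

Lemma littleo0_mul_id (s : Cplx -> Cplx) : tends0 s -> littleo0 (fun t => Cmul (s t) t).
Proof.
  intros Hs eps He. eapply near0_impl; [|apply (Hs eps He)].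
  intros t H. rewrite Cabs_mul. apply Rmult_le_compat_r; auto. apply Cabs_nonneg.
Qed.

Lemma tends0_littleo0 (r : Cplx -> Cplx) : littleo0 r -> tends0 r.
Proof.
  intros Hr eps He. eapply near0_impl; [|apply (near0_and _ _ (Hr 1 ltac:(lra)) (near0_ball eps He))].
  intros t [A B]. lra.
Qed.

Lemma tends0_ext (r s : Cplx -> Cplx) : (forall t, r t = s t) -> tends0 r -> tends0 s.
Proof. intros E H eps He. eapply near0_impl; [|apply (H eps He)]. intros t; cbv beta; rewrite E; auto. Qed.

Lemma tends0_add (r s : Cplx -> Cplx) :
  tends0 r -> tends0 s -> tends0 (fun t => Cadd (r t) (s t)).
Proof.
  intros Hr Hs eps Heps.
  eapply near0_impl; [|apply (near0_and _ _ (Hr (eps/2) ltac:(lra)) (Hs (eps/2) ltac:(lra)))].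
  intros t [A B]. eapply Rle_trans; [apply Cabs_triangle|]. lra.
Qed.

Lemma tends0_mull (c : Cplx) : tends0 (fun t => Cmul c t).
Proof.
  intros eps He. pose proof (Cabs_nonneg c).
  eapply near0_impl; [|apply (near0_ball (eps / (Cabs c + 1)) ltac:(apply Rdiv_lt_0_compat; lra))].
  intros t Ht. rewrite Cabs_mul. pose proof (Cabs_nonneg t).
  apply Rle_trans with ((Cabs c + 1) * (eps / (Cabs c + 1))); [|right; field; lra].
  apply Rle_trans with ((Cabs c + 1) * Cabs t); [nra|]. apply Rmult_le_compat_l; lra.
Qed.

Lemma tends0_mul_bounded (r s : Cplx -> Cplx) :
  tends0 r -> bounded0 s -> tends0 (fun t => Cmul (r t) (s t)).
Proof.
  intros Hr [K HK] eps Heps. set (K' := Rabs K + 1).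
  assert (HK' : K' > 0) by (unfold K'; pose proof (Rabs_pos K); lra).
  eapply near0_impl; [|apply (near0_and _ _ (Hr (eps / K') ltac:(apply Rdiv_lt_0_compat; lra)) HK)].
  intros t [A B]. rewrite Cabs_mul.
  assert (Cabs (s t) <= K') by (unfold K'; pose proof (Rle_abs K); lra).
  pose proof (Cabs_nonneg (r t)); pose proof (Cabs_nonneg (s t)).
  apply Rle_trans with (eps / K' * K'); [apply Rmult_le_compat; auto|]. right; field; lra.
Qed.

Lemma littleo0_scale (r : Cplx -> Cplx) (d : Cplx) :
  littleo0 r -> littleo0 (fun t => r (Cmul d t)).
Proof.
  intros Hr eps He. pose proof (Cabs_nonneg d).
  eapply near0_impl;
    [|apply (near0_scale _ d (Hr (eps / (Cabs d + 1)) ltac:(apply Rdiv_lt_0_compat; lra)))].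
  intros t Ht. cbv beta in Ht. rewrite Cabs_mul in Ht. pose proof (Cabs_nonneg t).
  eapply Rle_trans; [apply Ht|].
  apply Rle_trans with (eps / (Cabs d + 1) * ((Cabs d + 1) * Cabs t)).
  - apply Rmult_le_compat_l; [apply Rlt_le, Rdiv_lt_0_compat|]; nra.
  - right; field; lra.
Qed.

Definition deriv0 (f : Cplx -> Cplx) (c : Cplx) : Prop :=
  littleo0 (fun t => Csub (Csub (f t) (f C0)) (Cmul c t)).

Lemma deriv0_near (f g : Cplx -> Cplx) (c : Cplx) :
  near0 (fun t => f t = g t) -> deriv0 f c -> deriv0 g c.
Proof.
  intros E H. assert (E0 : f C0 = g C0) by (apply (near0_at0 _ E)).
  eapply littleo0_near; [|apply H]. eapply near0_impl; [|apply E].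
  intros t Ht. cbv beta. rewrite Ht, E0. reflexivity.
Qed.

Lemma deriv0_ext (f g : Cplx -> Cplx) (c : Cplx) : (forall t, f t = g t) -> deriv0 f c -> deriv0 g c.
Proof. intros E; apply deriv0_near, near0_all, E. Qed.

Lemma deriv0_const (z : Cplx) : deriv0 (fun _ => z) C0.
Proof. apply (littleo0_ext (fun _ => C0)); [intros; ring|apply littleo0_zero]. Qed.

Lemma deriv0_id : deriv0 (fun t => t) C1.
Proof. apply (littleo0_ext (fun _ => C0)); [intros; ring|apply littleo0_zero]. Qed.

Lemma deriv0_add (f g : Cplx -> Cplx) (c d : Cplx) :
  deriv0 f c -> deriv0 g d -> deriv0 (fun t => Cadd (f t) (g t)) (Cadd c d).
Proof. intros Hf Hg. eapply littleo0_ext; [|apply (littleo0_add _ _ Hf Hg)]. intros; simpl; ring. Qed.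

Lemma deriv0_mull (k : Cplx) (f : Cplx -> Cplx) (c : Cplx) :
  deriv0 f c -> deriv0 (fun t => Cmul k (f t)) (Cmul k c).
Proof. intros Hf. eapply littleo0_ext; [|apply (littleo0_mull k _ Hf)]. intros; simpl; ring. Qed.

Lemma deriv0_Csum (m : nat) (f : nat -> Cplx -> Cplx) (c : nat -> Cplx) :
  (forall k, (k < m)%nat -> deriv0 (f k) (c k)) ->
  deriv0 (fun t => Csum m (fun k => f k t)) (Csum m c).
Proof.
  induction m; intros H; simpl; [apply deriv0_const|].
  apply (deriv0_add (fun t => Csum m (fun k => f k t)) (f m)); [apply IHm; intros|]; apply H; lia.
Qed.

Lemma deriv0_affine (z c : Cplx) : deriv0 (fun t => Cadd z (Cmul t c)) c.
Proof. apply (littleo0_ext (fun _ => C0)); [intros; ring|apply littleo0_zero]. Qed.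

Lemma deriv0_mulmv_affine (N : nat) (L : mat) (v w : vec) (k : nat) :
  deriv0 (fun t => mulmv N L (fun l => Cadd (v l) (Cmul t (w l))) k) (mulmv N L w k).
Proof.
  eapply deriv0_ext; [|apply (deriv0_affine (mulmv N L v k))].
  intros t. unfold mulmv. rewrite <- Csum_mull, <- Csum_add. apply Csum_ext; intros; ring.
Qed.

Lemma deriv0_scale (f : Cplx -> Cplx) (c d : Cplx) :
  deriv0 f c -> deriv0 (fun t => f (Cmul d t)) (Cmul c d).
Proof.
  intros Hf. eapply littleo0_ext; [|apply (littleo0_scale _ d Hf)].
  intros t; cbv beta. replace (Cmul d C0) with C0 by ring. ring.
Qed.

Lemma deriv0_tends0 (f : Cplx -> Cplx) (c : Cplx) :
  deriv0 f c -> tends0 (fun t => Csub (f t) (f C0)).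
Proof.
  intros Hf. apply (tends0_ext (fun t => Cadd (Csub (Csub (f t) (f C0)) (Cmul c t)) (Cmul c t)));
    [intros; ring|].
  apply tends0_add; [apply tends0_littleo0; auto|apply tends0_mull].
Qed.

Lemma deriv0_bounded (f : Cplx -> Cplx) (c : Cplx) : deriv0 f c -> bounded0 f.
Proof.
  intros Hf. exists (1 + Cabs (f C0)).
  eapply near0_impl; [|apply (deriv0_tends0 f c Hf 1 ltac:(lra))].
  intros t Ht. cbv beta in Ht. replace (f t) with (Cadd (Csub (f t) (f C0)) (f C0)) by ring.
  eapply Rle_trans; [apply Cabs_triangle|]. lra.
Qed.

Lemma deriv0_mul (f g : Cplx -> Cplx) (c d : Cplx) : deriv0 f c -> deriv0 g d ->
  deriv0 (fun t => Cmul (f t) (g t)) (Cadd (Cmul c (g C0)) (Cmul (f C0) d)).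
Proof.
  intros Hf Hg.
  apply (littleo0_ext (fun t => Cadd (Cadd (Cmul (Csub (Csub (f t) (f C0)) (Cmul c t)) (g t))
                                         (Cmul (Cmul (Csub (g t) (g C0)) c) t))
                                   (Cmul (f C0) (Csub (Csub (g t) (g C0)) (Cmul d t)))));
    [intros; ring|].
  apply littleo0_add; [apply littleo0_add|].
  - apply littleo0_mul_bounded; auto. eapply deriv0_bounded; eauto.
  - apply littleo0_mul_id, tends0_mul_bounded; [eapply deriv0_tends0; eauto|apply bounded0_const].
  - apply littleo0_mull; auto.
Qed.

Lemma deriv0_near_Cabs_ge (g : Cplx -> Cplx) (c : Cplx) : deriv0 g c -> g C0 <> C0 ->
  near0 (fun t => Cabs (g C0) / 2 <= Cabs (g t)).
Proof.
  intros Hg H0. pose proof (Cabs_pos _ H0).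
  eapply near0_impl; [|apply (deriv0_tends0 g c Hg (Cabs (g C0) / 2) ltac:(lra))].
  intros t Ht. cbv beta in Ht.
  pose proof (Cabs_rev_triangle (g C0) (Csub (g t) (g C0))).
  replace (Cadd (g C0) (Csub (g t) (g C0))) with (g t) in H1 by ring. lra.
Qed.

Lemma deriv0_near_neq0 (g : Cplx -> Cplx) (c : Cplx) : deriv0 g c -> g C0 <> C0 ->
  near0 (fun t => g t <> C0).
Proof.
  intros Hg H0. pose proof (Cabs_pos _ H0).
  eapply near0_impl; [|apply (deriv0_near_Cabs_ge g c Hg H0)].
  intros t Ht E. cbv beta in Ht. rewrite E, Cabs_C0 in Ht. lra.
Qed.

Lemma bounded0_Cinv (g : Cplx -> Cplx) (c : Cplx) : deriv0 g c -> g C0 <> C0 ->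
  bounded0 (fun t => Cinv (g t)).
Proof.
  intros Hg H0. pose proof (Cabs_pos _ H0). exists (2 / Cabs (g C0)).
  eapply near0_impl; [|apply (near0_and _ _ (deriv0_near_Cabs_ge g c Hg H0) (deriv0_near_neq0 g c Hg H0))].
  intros t [Ht Hnz]. rewrite Cabs_inv by auto. pose proof (Cabs_pos _ Hnz).
  apply Rle_trans with (/ (Cabs (g C0) / 2)); [apply Rinv_le_contravar; lra|].
  right; field; lra.
Qed.

Lemma deriv0_inv (g : Cplx -> Cplx) (c : Cplx) : deriv0 g c -> g C0 <> C0 ->
  deriv0 (fun t => Cinv (g t)) (Copp (Cdiv c (Cmul (g C0) (g C0)))).
Proof.
  intros Hg H0. pose proof (bounded0_Cinv g c Hg H0) as Hb.
  apply (littleo0_near (fun t => Cadd (Cmul (Cmul (Copp (Csub (Csub (g t) (g C0)) (Cmul c t)))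
                                                 (Cinv (g C0))) (Cinv (g t)))
                                     (Cmul (Cmul (Cmul (Csub (g t) (g C0)) (Cinv (g t)))
                                                 (Cdiv c (Cmul (g C0) (g C0)))) t))).
  { eapply near0_impl; [|apply (deriv0_near_neq0 g c Hg H0)]. intros t Ht. field; auto. }
  apply littleo0_add.
  - apply littleo0_mul_bounded; auto.
    apply (littleo0_ext (fun t => Cmul (Copp (Cinv (g C0))) (Csub (Csub (g t) (g C0)) (Cmul c t))));
      [intros; ring|].
    apply littleo0_mull; auto.
  - apply littleo0_mul_id, tends0_mul_bounded; [|apply bounded0_const].
    apply tends0_mul_bounded; auto. eapply deriv0_tends0; eauto.
Qed.

Lemma deriv0_div (f g : Cplx -> Cplx) (c d : Cplx) : deriv0 f c -> deriv0 g d -> g C0 <> C0 ->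
  deriv0 (fun t => Cdiv (f t) (g t))
    (Cadd (Cmul c (Cinv (g C0))) (Cmul (f C0) (Copp (Cdiv d (Cmul (g C0) (g C0)))))).
Proof. intros Hf Hg H0. apply (deriv0_mul f (fun t => Cinv (g t))); auto. apply deriv0_inv; auto. Qed.

Lemma deriv0_unique (f : Cplx -> Cplx) (c d : Cplx) : deriv0 f c -> deriv0 f d -> c = d.
Proof.
  intros Hc Hd. replace c with (Cadd (Csub c d) d) by ring.
  replace (Csub c d) with C0; [ring|]. symmetry; apply Cabs_eq0.
  apply NNPP; intros Hne. pose proof (Cabs_nonneg (Csub c d)) as Hnn.
  set (e := Cabs (Csub c d) / 4). assert (He : e > 0) by (unfold e; lra).
  destruct (near0_and _ _ (Hc e He) (Hd e He)) as [del [Hdel Hnear]].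
  set (t := RtoC (del / 2)).
  assert (Ht : Cabs t = del / 2) by (unfold t; rewrite Cabs_RtoC; apply Rabs_right; lra).
  destruct (Hnear t ltac:(lra)) as [A B].
  pose proof (Cabs_sub_triangle (Csub (Csub (f t) (f C0)) (Cmul d t))
                                (Csub (Csub (f t) (f C0)) (Cmul c t))) as Htri.
  replace (Csub (Csub (Csub (f t) (f C0)) (Cmul d t)) (Csub (Csub (f t) (f C0)) (Cmul c t)))
    with (Cmul (Csub c d) t) in Htri by ring.
  rewrite Cabs_mul, Ht in Htri. unfold e in *. nra.
Qed.

Lemma deriv0_vec_lipschitz (N : nat) (u : Cplx -> vec) (b : vec) :
  (forall k, (k < N)%nat -> deriv0 (fun t => u t k) (b k)) ->
  exists K, 0 <= K /\ near0 (fun t => vnorm N (vsub (u t) (u C0)) <= K * Cabs t).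
Proof.
  intros Hu. exists (Rsumn N (fun k => Cabs (b k) + 1)). split.
  { apply Rsumn_nonneg; intros k _; pose proof (Cabs_nonneg (b k)); lra. }
  eapply near0_impl; [|apply (near0_forall_lt N _ (fun k Hk => Hu k Hk 1 ltac:(lra)))].
  intros t Ht. unfold vnorm. rewrite Rmult_comm, <- Rsumn_mull. apply Rsumn_le. intros k Hk.
  pose proof (Ht k Hk) as Htk. cbv beta in Htk.
  pose proof (Cabs_triangle (Csub (Csub (u t k) (u C0 k)) (Cmul (b k) t)) (Cmul (b k) t)).
  replace (Cadd (Csub (Csub (u t k) (u C0 k)) (Cmul (b k) t)) (Cmul (b k) t))
    with (vsub (u t) (u C0) k) in H by (unfold vsub; ring).
  rewrite Cabs_mul in H. lra.
Qed.

Lemma deriv0_vec_tends0 (N : nat) (u : Cplx -> vec) (b : vec) :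
  (forall k, (k < N)%nat -> deriv0 (fun t => u t k) (b k)) ->
  forall e, e > 0 -> near0 (fun t => vnorm N (vsub (u t) (u C0)) < e).
Proof.
  intros Hu e He. destruct (deriv0_vec_lipschitz N u b Hu) as [K [HK Hlip]].
  eapply near0_impl; [|apply (near0_and _ _ Hlip (near0_ball (e / (K + 1)) ltac:(apply Rdiv_lt_0_compat; lra)))].
  intros t [Ht Hsmall]. pose proof (Cabs_nonneg t).
  apply Rle_lt_trans with ((K + 1) * Cabs t); [nra|].
  apply Rlt_le_trans with ((K + 1) * (e / (K + 1))); [apply Rmult_lt_compat_l; lra|right; field; lra].
Qed.

Definition is_Cderiv (N : nat) (g : vec -> Cplx) (w a : vec) : Prop :=
  forall eps, eps > 0 -> exists delta, delta > 0 /\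
    forall h, vnorm N h < delta ->
      Cabs (Csub (Csub (g (vadd w h)) (g w)) (Csum N (fun k => Cmul (a k) (h k))))
        <= eps * vnorm N h.

Lemma deriv0_comp (N : nat) (g : vec -> Cplx) (a : vec) (u : Cplx -> vec) (b : vec) :
  is_Cderiv N g (u C0) a -> (forall k, (k < N)%nat -> deriv0 (fun t => u t k) (b k)) ->
  deriv0 (fun t => g (u t)) (Csum N (fun k => Cmul (a k) (b k))).
Proof.
  intros Hg Hu. set (h := fun t => vsub (u t) (u C0)).
  assert (Eu : forall t, u t = vadd (u C0) (h t)).
  { intros t; extensionality k; unfold h, vadd, vsub; ring. }
  apply (littleo0_ext
    (fun t => Cadd (Csub (Csub (g (vadd (u C0) (h t))) (g (u C0))) (Csum N (fun k => Cmul (a k) (h t k))))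
                   (Csum N (fun k => Cmul (a k) (Csub (h t k) (Cmul (b k) t)))))).
  { intros t. rewrite <- Eu, <- Csum_mulr.
    replace (Csum N (fun k => Cmul (a k) (Csub (h t k) (Cmul (b k) t))))
      with (Csub (Csum N (fun k => Cmul (a k) (h t k))) (Csum N (fun k => Cmul (Cmul (a k) (b k)) t)));
      [ring|].
    rewrite <- Csum_sub. apply Csum_ext; intros; ring. }
  apply littleo0_add.
  - intros eps He. destruct (deriv0_vec_lipschitz N u b Hu) as [K [HK Hlip]].
    destruct (Hg (eps / (K + 1)) ltac:(apply Rdiv_lt_0_compat; lra)) as [del [Hdel Hd]].
    eapply near0_impl; [|apply (near0_and _ _ Hlip (deriv0_vec_tends0 N u b Hu del Hdel))].
    intros t [Hl Hs]. fold (h t) in Hl, Hs. pose proof (Cabs_nonneg t).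
    eapply Rle_trans; [apply Hd; auto|].
    apply Rle_trans with (eps / (K + 1) * ((K + 1) * Cabs t)).
    + apply Rmult_le_compat_l; [apply Rlt_le, Rdiv_lt_0_compat|]; nra.
    + right; field; lra.
  - apply (littleo0_Csum N (fun k t => Cmul (a k) (Csub (h t k) (Cmul (b k) t)))).
    intros k Hk. apply littleo0_mull. eapply littleo0_ext; [|apply (Hu k Hk)].
    intros t; unfold h, vsub; cbv beta; ring.
Qed.

(** * Curves under holomorphic self-maps of projective space *)

Lemma proj_eq_sym (N : nat) (v w : vec) : proj_eq N v w -> proj_eq N w v.
Proof.
  intros [l [Hl H]]. exists (Cinv l); split; [apply Cinv_neq0; auto|].
  intros k Hk. rewrite H by auto. field; auto.
Qed.

Lemma proj_eq_trans (N : nat) (u v w : vec) : proj_eq N u v -> proj_eq N v w -> proj_eq N u w.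
Proof.
  intros [l1 [H1 E1]] [l2 [H2 E2]]. exists (Cmul l2 l1); split; [apply Cmul_neq0; auto|].
  intros k Hk. rewrite E2, E1 by auto. ring.
Qed.

Lemma nonzero_vec_proj_eq (N : nat) (v w : vec) : nonzero_vec N v -> proj_eq N v w -> nonzero_vec N w.
Proof.
  intros [k [Hk Hv]] [l [Hl E]]. exists k; split; auto. rewrite E by auto. apply Cmul_neq0; auto.
Qed.

Lemma proj_map_ratio (N : nat) (F : vec -> vec) (v w : vec) (b : nat) :
  proj_map N F -> nonzero_vec N v -> proj_eq N v w -> (b < N)%nat -> F w b <> C0 ->
  F v b <> C0 /\ forall k, (k < N)%nat -> Cdiv (F w k) (F w b) = Cdiv (F v k) (F v b).
Proof.
  intros [_ HF] Hv Hvw Hb Hw. destruct (HF v w Hv Hvw) as [l [Hl E]].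
  rewrite E in Hw by auto. assert (F v b <> C0) by (intros Z; apply Hw; rewrite Z; ring).
  split; auto. intros k Hk. rewrite !E by auto. field; auto.
Qed.

Lemma proj_eq_chart_emb (N : nat) (v : vec) (a : nat) : (a < N)%nat -> v a <> C0 ->
  proj_eq N v (chart_emb a (fun k => Cdiv (v k) (v a))).
Proof.
  intros Ha Hva. exists (Cinv (v a)); split; [apply Cinv_neq0; auto|].
  intros k Hk. unfold chart_emb. destruct (Nat.eqb_spec k a) as [->|]; [field; auto|unfold Cdiv; ring].
Qed.

Lemma bounded_choice {X : Type} (x0 : X) (N : nat) (P : nat -> X -> Prop) :
  (forall k, (k < N)%nat -> exists x, P k x) ->
  exists f : nat -> X, forall k, (k < N)%nat -> P k (f k).
Proof.
  intros H. assert (H' : forall k, exists x, (k < N)%nat -> P k x).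
  { intros k. destruct (Nat.lt_ge_cases k N) as [Hk|Hk].
    - destruct (H k Hk) as [x Hx]; exists x; auto.
    - exists x0; intros; lia. }
  exists (fun k => proj1_sig (constructive_indefinite_description _ (H' k))).
  intros k Hk. exact (proj2_sig (constructive_indefinite_description _ (H' k)) Hk).
Qed.

(* Read in the charts at a and at b, F becomes differentiable; composing with
   the chart expression of the curve c gives the ratios F(c t)_k / F(c t)_b. *)
Lemma proj_map_curve_ratios (N : nat) (F : vec -> vec) (c : Cplx -> vec) (beta : vec) (a b : nat) :
  proj_map N F -> holo_proj N F -> (a < N)%nat -> (b < N)%nat ->
  c C0 a <> C0 -> F (c C0) b <> C0 ->
  (forall k, (k < N)%nat -> deriv0 (fun t => c t k) (beta k)) ->
  exists (Rf : nat -> Cplx -> Cplx) (gam : vec),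
    (forall k, (k < N)%nat -> deriv0 (Rf k) (gam k)) /\
    ((forall k, (k < N)%nat -> beta k = C0) -> forall k, (k < N)%nat -> gam k = C0) /\
    near0 (fun t => F (c t) b <> C0 /\
                    forall k, (k < N)%nat -> Rf k t = Cdiv (F (c t) k) (F (c t) b)).
Proof.
  intros HPF HHF Ha Hb Hca HFb Hc.
  destruct (HHF (c C0) a b Ha Hb Hca HFb) as [d1 [Hd1 Hchart]].
  set (u := fun t k => Cdiv (c t k) (c t a)).
  set (R := fun k w => Cdiv (F (chart_emb a w) k) (F (chart_emb a w) b)).
  set (beta' := fun k => Cadd (Cmul (beta k) (Cinv (c C0 a)))
                              (Cmul (c C0 k) (Copp (Cdiv (beta a) (Cmul (c C0 a) (c C0 a)))))).
  assert (Hu : forall k, (k < N)%nat -> deriv0 (fun t => u t k) (beta' k)).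
  { intros k Hk. apply (deriv0_div (fun t => c t k) (fun t => c t a)); auto. }
  destruct (Hchart (u C0)) as [_ Hdiff].
  { rewrite vnorm_eq0; [lra|]. intros; unfold vsub, u; ring. }
  destruct (bounded_choice (fun _ => C0) N (fun k al => is_Cderiv N (R k) (u C0) al))
    as [al Hal]; [intros k Hk; apply (Hdiff k Hk)|].
  exists (fun k t => R k (u t)), (fun k => Csum N (fun l => Cmul (al k l) (beta' l))).
  split; [|split].
  - intros k Hk. apply (deriv0_comp N (R k) (al k) u beta'); auto.
  - intros Hz k Hk. apply Csum_zero. intros l Hl. unfold beta'. rewrite !Hz by auto. field; auto.
  - eapply near0_impl; [|apply (near0_and _ _ (deriv0_vec_tends0 N u beta' Hu d1 Hd1)
                                              (deriv0_near_neq0 _ _ (Hc a Ha) Hca))].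
    intros t [Ht1 Ht2]. destruct (Hchart (u t) Ht1) as [Hnz _].
    apply (proj_map_ratio N F (c t) (chart_emb a (u t)) b HPF); auto.
    + exists a; auto.
    + apply proj_eq_chart_emb; auto.
Qed.

Lemma proj_map_curve_coords (N : nat) (F : vec -> vec) (L : mat) (c : Cplx -> vec) (beta : vec)
  (m : nat) :
  proj_map N F -> holo_proj N F -> nonzero_vec N (c C0) ->
  (forall k, (k < N)%nat -> deriv0 (fun t => c t k) (beta k)) ->
  mulmv N L (F (c C0)) m <> C0 ->
  exists (y : Cplx -> vec) (A : vec),
    (forall i, deriv0 (fun t => y t i) (A i)) /\
    ((forall k, (k < N)%nat -> beta k = C0) -> forall i, A i = C0) /\
    near0 (fun t => mulmv N L (F (c t)) m <> C0 /\
                    forall i, y t i = Cdiv (mulmv N L (F (c t)) i) (mulmv N L (F (c t)) m)).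
Proof.
  intros HPF HHF Hc0 Hc Hm.
  destruct Hc0 as [a [Ha Hca]].
  destruct (proj1 HPF (c C0) (ex_intro _ a (conj Ha Hca))) as [b [Hb HFb]].
  destruct (proj_map_curve_ratios N F c beta a b HPF HHF Ha Hb Hca HFb Hc)
    as [Rf [gam [HRf [Hgam Hnear]]]].
  set (Y := fun t i => Csum N (fun k => Cmul (L i k) (Rf k t))).
  set (Y' := fun i => Csum N (fun k => Cmul (L i k) (gam k))).
  assert (HY : forall i, deriv0 (fun t => Y t i) (Y' i)).
  { intros i. apply (deriv0_Csum N (fun k t => Cmul (L i k) (Rf k t))). intros; apply deriv0_mull; auto. }
  assert (HYF : near0 (fun t => F (c t) b <> C0 /\
                                forall i, Y t i = Cdiv (mulmv N L (F (c t)) i) (F (c t) b))).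
  { eapply near0_impl; [|apply Hnear]. intros t [Hb' HR]. split; auto. intros i.
    rewrite <- mulmv_div. apply Csum_ext. intros k Hk. rewrite HR; auto. }
  assert (HY0 : Y C0 m <> C0).
  { destruct (near0_at0 _ HYF) as [Hb0 E]. rewrite E. apply Cdiv_neq0; auto. }
  exists (fun t i => Cdiv (Y t i) (Y t m)),
    (fun i => Cadd (Cmul (Y' i) (Cinv (Y C0 m))) (Cmul (Y C0 i) (Copp (Cdiv (Y' m) (Cmul (Y C0 m) (Y C0 m)))))).
  split; [|split].
  - intros i. apply (deriv0_div (fun t => Y t i) (fun t => Y t m)); auto.
  - intros Hz i.
    assert (HY'0 : forall i', Y' i' = C0).
    { intros i'. apply Csum_zero. intros k Hk. rewrite Hgam by auto. ring. }
    rewrite !HY'0. field; auto.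
  - eapply near0_impl; [|apply (near0_and _ _ HYF (deriv0_near_neq0 _ _ (HY m) HY0))].
    intros t [[Hb' E] Hm']. rewrite E in Hm'.
    assert (mulmv N L (F (c t)) m <> C0) by (intros Z; apply Hm'; rewrite Z; unfold Cdiv; ring).
    split; auto. intros i. rewrite !E. field; auto.
Qed.

(** * Sufficiency: linear maps *)

Lemma quotient_affine_remainder (f0 g0 s1 s2 : Cplx) (A B v : R) : g0 <> C0 ->
  0 <= A -> 0 <= B -> 0 <= v -> Cabs s1 <= A * v -> Cabs s2 <= B * v -> B * v <= Cabs g0 / 2 ->
  Cadd g0 s2 <> C0 /\
  Cabs (Csub (Csub (Cdiv (Cadd f0 s1) (Cadd g0 s2)) (Cdiv f0 g0))
             (Cdiv (Csub (Cmul s1 g0) (Cmul f0 s2)) (Cmul g0 g0)))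
    <= 2 * B * (Cabs f0 * B + Cabs g0 * A) / (Cabs g0 * Cabs g0 * Cabs g0) * v * v.
Proof.
  intros Hg0 HA HB Hv Hs1 Hs2 Hsmall.
  pose proof (Cabs_pos _ Hg0) as Ha0. set (a0 := Cabs g0) in *.
  assert (Hg : a0 / 2 <= Cabs (Cadd g0 s2)) by (pose proof (Cabs_rev_triangle g0 s2) as Ht; fold a0 in Ht; lra).
  assert (Hgnz : Cadd g0 s2 <> C0) by (intros E; rewrite E, Cabs_C0 in Hg; lra).
  split; auto.
  replace (Csub (Csub (Cdiv (Cadd f0 s1) (Cadd g0 s2)) (Cdiv f0 g0))
                (Cdiv (Csub (Cmul s1 g0) (Cmul f0 s2)) (Cmul g0 g0)))
    with (Cmul (Cmul s2 (Csub (Cmul f0 s2) (Cmul g0 s1))) (Cinv (Cmul (Cadd g0 s2) (Cmul g0 g0))))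
    by (field; auto).
  rewrite !Cabs_mul, Cabs_inv by (repeat apply Cmul_neq0; auto). rewrite !Cabs_mul. fold a0.
  set (K := Cabs f0 * B + a0 * A).
  assert (Hnum : Cabs (Csub (Cmul f0 s2) (Cmul g0 s1)) <= K * v).
  { eapply Rle_trans; [apply Cabs_sub_triangle|]. rewrite !Cabs_mul. fold a0. unfold K.
    pose proof (Cabs_nonneg f0).
    pose proof (Rmult_le_compat_l _ _ _ H Hs2). pose proof (Rmult_le_compat_l a0 _ _ (Rlt_le _ _ Ha0) Hs1).
    nra. }
  assert (Hden : / (Cabs (Cadd g0 s2) * (a0 * a0)) <= 2 / (a0 * a0 * a0)).
  { apply Rle_trans with (/ (a0 / 2 * (a0 * a0))).
    - apply Rinv_le_contravar; [repeat apply Rmult_lt_0_compat; lra|].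
      apply Rmult_le_compat_r; [apply Rlt_le, Rmult_lt_0_compat|]; lra.
    - right; field; lra. }
  pose proof (Cabs_nonneg s2). pose proof (Cabs_nonneg (Csub (Cmul f0 s2) (Cmul g0 s1))).
  assert (0 <= / (Cabs (Cadd g0 s2) * (a0 * a0)))
    by (apply Rlt_le, Rinv_0_lt_compat; repeat apply Rmult_lt_0_compat; lra).
  apply Rle_trans with (B * v * (K * v) * (2 / (a0 * a0 * a0))); [|right; field; lra].
  apply Rmult_le_compat; auto; [apply Rmult_le_pos; auto|]. apply Rmult_le_compat; auto.
Qed.

Lemma quotient_affine_deriv (N : nat) (f0 g0 : Cplx) (al be : vec) : g0 <> C0 ->
  forall eps, eps > 0 -> exists delta, delta > 0 /\ forall h, vnorm N h < delta ->
    Cadd g0 (Csum N (fun k => Cmul (be k) (h k))) <> C0 /\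
    Cabs (Csub (Csub (Cdiv (Cadd f0 (Csum N (fun k => Cmul (al k) (h k))))
                           (Cadd g0 (Csum N (fun k => Cmul (be k) (h k)))))
                     (Cdiv f0 g0))
               (Csum N (fun k => Cmul (Cdiv (Csub (Cmul (al k) g0) (Cmul f0 (be k))) (Cmul g0 g0)) (h k))))
      <= eps * vnorm N h.
Proof.
  intros Hg0 eps He.
  set (A := Rsumn N (fun k => Cabs (al k))). set (B := Rsumn N (fun k => Cabs (be k))).
  assert (HA : 0 <= A) by (apply Rsumn_nonneg; intros; apply Cabs_nonneg).
  assert (HB : 0 <= B) by (apply Rsumn_nonneg; intros; apply Cabs_nonneg).
  pose proof (Cabs_pos _ Hg0) as Ha0.
  set (C := 2 * B * (Cabs f0 * B + Cabs g0 * A) / (Cabs g0 * Cabs g0 * Cabs g0)).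
  assert (HC : 0 <= C).
  { unfold C. pose proof (Cabs_nonneg f0).
    assert (0 <= Cabs f0 * B + Cabs g0 * A) by (apply Rplus_le_le_0_compat; apply Rmult_le_pos; lra).
    apply Rmult_le_pos; [apply Rmult_le_pos; lra|].
    apply Rlt_le, Rinv_0_lt_compat; repeat apply Rmult_lt_0_compat; lra. }
  exists (Rmin (Cabs g0 / (2 * (B + 1))) (eps / (C + 1))). split.
  { apply Rmin_Rgt_r; split; apply Rdiv_lt_0_compat; lra. }
  intros h Hh. pose proof (vnorm_nonneg N h) as Hv.
  pose proof (Rmin_l (Cabs g0 / (2 * (B + 1))) (eps / (C + 1))).
  pose proof (Rmin_r (Cabs g0 / (2 * (B + 1))) (eps / (C + 1))).
  set (s1 := Csum N (fun k => Cmul (al k) (h k))). set (s2 := Csum N (fun k => Cmul (be k) (h k))).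
  assert (Hlin : Csum N (fun k => Cmul (Cdiv (Csub (Cmul (al k) g0) (Cmul f0 (be k))) (Cmul g0 g0)) (h k))
                 = Cdiv (Csub (Cmul s1 g0) (Cmul f0 s2)) (Cmul g0 g0)).
  { transitivity (Csum N (fun k => Cmul (Cinv (Cmul g0 g0))
                                        (Csub (Cmul (Cmul (al k) (h k)) g0) (Cmul f0 (Cmul (be k) (h k)))))).
    - apply Csum_ext; intros; field; auto.
    - rewrite Csum_mull, Csum_sub, Csum_mulr, Csum_mull. fold s1 s2. unfold Cdiv; ring. }
  rewrite Hlin.
  destruct (quotient_affine_remainder f0 g0 s1 s2 A B (vnorm N h)) as [Hnz Hrem]; auto.
  - apply Cabs_linear_form_le.
  - apply Cabs_linear_form_le.
  - apply Rle_trans with ((B + 1) * (Cabs g0 / (2 * (B + 1)))); [apply Rmult_le_compat; lra|right; field; lra].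
  - split; auto. fold C in Hrem. eapply Rle_trans; [apply Hrem|].
    assert (C * vnorm N h <= eps).
    { apply Rle_trans with ((C + 1) * (eps / (C + 1))); [|right; field; lra].
      apply Rmult_le_compat; lra. }
    nra.
Qed.

Lemma mulmv_chart_emb_add (N : nat) (L : mat) (i k : nat) (w h : vec) :
  mulmv N L (chart_emb i (vadd w h)) k =
  Cadd (mulmv N L (chart_emb i w) k) (Csum N (fun l => Cmul (if Nat.eqb l i then C0 else L k l) (h l))).
Proof.
  unfold mulmv. rewrite <- Csum_add. apply Csum_ext. intros l Hl.
  unfold chart_emb, vadd. destruct (Nat.eqb l i); ring.
Qed.

(* In a chart, a linear map is a quotient of two affine functions. *)
Lemma mulmv_holo_proj (N : nat) (L : mat) : holo_proj N (mulmv N L).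
Proof.
  intros v0 i j Hi Hj Hvi HLj. cbv zeta. set (w0 := fun k => Cdiv (v0 k) (v0 i)).
  set (Lc := fun k l => if Nat.eqb l i then C0 else L k l).
  assert (Hexp : forall k w h, mulmv N L (chart_emb i (vadd w h)) k =
                               Cadd (mulmv N L (chart_emb i w) k) (Csum N (fun l => Cmul (Lc k l) (h l))))
    by (intros; apply mulmv_chart_emb_add).
  assert (Hw0 : mulmv N L (chart_emb i w0) j <> C0).
  { destruct (proj_eq_chart_emb N v0 i Hi Hvi) as [l0 [Hl0 E0]].
    rewrite (mulmv_ext N L _ (fun k => Cmul l0 (v0 k))) by auto.
    rewrite mulmv_mull. apply Cmul_neq0; auto. }
  destruct (quotient_affine_deriv N C0 _ (Lc j) (Lc j) Hw0 1 ltac:(lra)) as [delta [Hdelta Hnear]].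
  exists delta; split; auto. intros w Hw.
  assert (Hwj : mulmv N L (chart_emb i w) j <> C0).
  { replace w with (vadd w0 (vsub w w0)) by (extensionality k; unfold vadd, vsub; ring).
    rewrite Hexp. apply (Hnear _ Hw). }
  split; auto. intros k Hk.
  exists (fun l => Cdiv (Csub (Cmul (Lc k l) (mulmv N L (chart_emb i w) j))
                              (Cmul (mulmv N L (chart_emb i w) k) (Lc j l)))
                        (Cmul (mulmv N L (chart_emb i w) j) (mulmv N L (chart_emb i w) j))).
  intros eps He. destruct (quotient_affine_deriv N (mulmv N L (chart_emb i w) k) _ (Lc k) (Lc j) Hwj eps He) as [d [Hd Hq]].
  exists d; split; auto. intros h Hh. rewrite !Hexp. apply Hq; auto.
Qed.

Lemma mulmv_proj_map (N : nat) (L L' : mat) :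
  (forall v k, (k < N)%nat -> mulmv N L' (mulmv N L v) k = v k) -> proj_map N (mulmv N L).
Proof.
  intros HL. split; [intros v; apply (mulmv_nonzero N L L'); auto|].
  intros v w _ [l [Hl E]]. exists l; split; auto. intros k Hk.
  rewrite (mulmv_ext N L w (fun k => Cmul l (v k))), mulmv_mull by auto. reflexivity.
Qed.

Lemma mulmv_biholo_proj (N : nat) (L L' : mat) :
  (forall v k, (k < N)%nat -> mulmv N L' (mulmv N L v) k = v k) ->
  (forall w k, (k < N)%nat -> mulmv N L (mulmv N L' w) k = w k) ->
  biholo_proj N (mulmv N L) (mulmv N L').
Proof.
  intros HL'L HLL'.
  split; [apply (mulmv_proj_map N L L' HL'L)|].
  split; [apply (mulmv_proj_map N L' L HLL')|].
  split; [intros v _; exists C1; split; [apply C1_neq_C0|]; intros k Hk; rewrite HL'L by auto; ring|].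
  split; [intros w _; exists C1; split; [apply C1_neq_C0|]; intros k Hk; rewrite HLL' by auto; ring|].
  split; apply mulmv_holo_proj.
Qed.

Definition perm_mx (rho : nat -> nat) : mat := fun i k => if Nat.eqb i (rho k) then C1 else C0.
Definition perm_mx_inv (rho : nat -> nat) : mat := fun k i => if Nat.eqb i (rho k) then C1 else C0.

Section PermutationMatrix.

Variables (N : nat) (rho : nat -> nat).
Hypothesis Hrho : is_perm N rho.

Lemma mulmv_perm_mx (u : vec) (k : nat) : (k < N)%nat -> mulmv N (perm_mx rho) u (rho k) = u k.
Proof.
  intros Hk. unfold mulmv, perm_mx. rewrite (Csum_single N _ k Hk), Nat.eqb_refl; [ring|].
  intros l Hl Hlk. destruct (Nat.eqb_spec (rho k) (rho l)) as [E|]; [|ring].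
  exfalso; apply Hlk; symmetry; apply (proj2 Hrho); auto.
Qed.

Lemma mulmv_perm_mx_inv (w : vec) (k : nat) : (k < N)%nat -> mulmv N (perm_mx_inv rho) w k = w (rho k).
Proof.
  intros Hk. unfold mulmv, perm_mx_inv. rewrite (Csum_single N _ (rho k)), Nat.eqb_refl;
    [ring|apply Hrho; auto|].
  intros l Hl Hlk. destruct (Nat.eqb_spec l (rho k)); [lia|ring].
Qed.

Lemma perm_surj (i : nat) : (i < N)%nat -> exists k, (k < N)%nat /\ rho k = i.
Proof. apply (proj1 (bInjective_bSurjective (proj1 Hrho)) (proj2 Hrho)). Qed.

Lemma perm_mx_inv_l (u : vec) (k : nat) : (k < N)%nat ->
  mulmv N (perm_mx_inv rho) (mulmv N (perm_mx rho) u) k = u k.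
Proof. intros Hk. rewrite mulmv_perm_mx_inv, mulmv_perm_mx; auto. Qed.

Lemma perm_mx_inv_r (w : vec) (i : nat) : (i < N)%nat ->
  mulmv N (perm_mx rho) (mulmv N (perm_mx_inv rho) w) i = w i.
Proof.
  intros Hi. destruct (perm_surj i Hi) as [k [Hk <-]].
  rewrite mulmv_perm_mx, mulmv_perm_mx_inv; auto.
Qed.

End PermutationMatrix.

Section Sufficiency.

Variables (n : nat) (Sm Sinv Tm Tinv : mat) (rho : nat -> nat).
Local Notation N := (Datatypes.S n).
Hypotheses (HS : mat_inverse N Sm Sinv) (HT : mat_inverse N Tm Tinv) (Hrho : is_perm N rho).

Definition perm_conj : mat := mulmm N (mulmm N Tm (perm_mx rho)) Sinv.
Definition perm_conj_inv : mat := mulmm N (mulmm N Sm (perm_mx_inv rho)) Tinv.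

Lemma perm_conj_biholo : biholo_proj N (mulmv N perm_conj) (mulmv N perm_conj_inv).
Proof.
  unfold perm_conj, perm_conj_inv. apply mulmv_biholo_proj; intros v k Hk; rewrite !mulmv_mulmm.
  - rewrite (mulmv_ext N Sm _ (mulmv N Sinv v)); [apply mulmv_inv_r; auto|].
    intros l Hl. rewrite (mulmv_ext N (perm_mx_inv rho) _ (mulmv N (perm_mx rho) (mulmv N Sinv v)))
      by (intros; apply mulmv_inv_l; auto).
    apply perm_mx_inv_l; auto.
  - rewrite (mulmv_ext N Tm _ (mulmv N Tinv v)); [apply mulmv_inv_r; auto|].
    intros i Hi. rewrite (mulmv_ext N (perm_mx rho) _ (mulmv N (perm_mx_inv rho) (mulmv N Tinv v)))
      by (intros; apply mulmv_inv_l; auto).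
    apply perm_mx_inv_r; auto.
Qed.

Lemma perm_conj_intertwines (d e : vec) (lam : Cplx) : lam <> C0 ->
  (forall k, (k < N)%nat -> e (rho k) = Cmul lam (d k)) ->
  forall v, proj_eq N (mulmv N perm_conj (mulmv N (conj_diag N Sm Sinv d) v))
                      (mulmv N (conj_diag N Tm Tinv e) (mulmv N perm_conj v)).
Proof.
  intros Hlam He v. exists lam; split; auto. intros i Hi.
  unfold perm_conj. rewrite mulmv_conj_diag, !mulmv_mulmm.
  transitivity (mulmv N Tm (fun k => Cmul lam (mulmv N (perm_mx rho)
                  (mulmv N Sinv (mulmv N (conj_diag N Sm Sinv d) v)) k)) i);
    [|rewrite mulmv_mull; reflexivity].
  apply (f_equal (fun u : vec => u i)), mulmv_ext. intros k Hk.
  rewrite mulmv_inv_l by auto. destruct (perm_surj N rho Hrho k Hk) as [l [Hl <-]].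
  rewrite !mulmv_perm_mx, He, mulmv_inv_conj_diag by auto. ring.
Qed.

End Sufficiency.

Lemma sufficiency (n : nat) (I : Type) (Sm Sinv Tm Tinv : mat) (p q : I -> nat -> Cplx)
  (rho : nat -> nat) :
  mat_inverse (Datatypes.S n) Sm Sinv -> mat_inverse (Datatypes.S n) Tm Tinv ->
  (forall r k, (k <= n)%nat -> p r k <> C0) -> (forall r k, (k <= n)%nat -> q r k <> C0) ->
  is_perm (Datatypes.S n) rho ->
  (forall (r : I) (k : nat), (k < n)%nat -> Cdiv (q r (rho k)) (q r (rho n)) = Cdiv (p r k) (p r n)) ->
  exists F G : vec -> vec,
    biholo_proj (Datatypes.S n) F G /\
    forall (r : I) (v : vec), nonzero_vec (Datatypes.S n) v ->
      proj_eq (Datatypes.S n)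
        (F (mulmv (Datatypes.S n) (conj_diag (Datatypes.S n) Sm Sinv (p r)) v))
        (mulmv (Datatypes.S n) (conj_diag (Datatypes.S n) Tm Tinv (q r)) (F v)).
Proof.
  intros HS HT Hp Hq Hrho Hratio.
  exists (mulmv (Datatypes.S n) (perm_conj n Sinv Tm rho)), (mulmv (Datatypes.S n) (perm_conj_inv n Sm Tinv rho)).
  split; [apply perm_conj_biholo; auto|]. intros r v _.
  assert (Hpn : p r n <> C0) by (apply Hp; lia).
  assert (Hqn : q r (rho n) <> C0) by (apply Hq; pose proof (proj1 Hrho n ltac:(lia)); lia).
  apply (perm_conj_intertwines n Sm Sinv Tm Tinv rho HS HT Hrho _ _ (Cdiv (q r (rho n)) (p r n)));
    [apply Cdiv_neq0; auto|].
  intros k Hk. destruct (Nat.eq_dec k n) as [->|Hkn]; [field; auto|].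
  replace (q r (rho k)) with (Cmul (Cdiv (q r (rho k)) (q r (rho n))) (q r (rho n))) by (field; auto).
  rewrite Hratio by lia. field; auto.
Qed.

(** * Necessity: eigenvalue ratios along invariant lines *)

Definition basis_line (n j : nat) (t : Cplx) : vec :=
  fun k => Cadd (idm k n) (Cmul t (idm k j)).

Lemma basis_line_diag (n j : nat) (d : vec) (t : Cplx) (k : nat) : j <> n -> d n <> C0 ->
  Cmul (d k) (basis_line n j t k) = Cmul (d n) (basis_line n j (Cmul (Cdiv (d j) (d n)) t) k).
Proof.
  intros Hjn Hd. unfold basis_line, idm.
  destruct (Nat.eqb_spec k n), (Nat.eqb_spec k j); subst; try lia; field; auto.
Qed.

Section Necessity.

Variables (n : nat) (I : Type) (Sm Sinv Tm Tinv : mat) (p q : I -> nat -> Cplx) (F G : vec -> vec).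
Local Notation N := (Datatypes.S n).
Hypotheses (HS : mat_inverse N Sm Sinv) (HT : mat_inverse N Tm Tinv).
Hypotheses (Hp : forall r k, (k <= n)%nat -> p r k <> C0) (Hq : forall r k, (k <= n)%nat -> q r k <> C0).
Hypothesis HFG : biholo_proj N F G.
Hypothesis Hcomm : forall r v, nonzero_vec N v ->
  proj_eq N (F (mulmv N (conj_diag N Sm Sinv (p r)) v)) (mulmv N (conj_diag N Tm Tinv (q r)) (F v)).

Definition line (j : nat) (t : Cplx) : vec := mulmv N Sm (basis_line n j t).

Lemma Sinv_line (j : nat) (t : Cplx) (i : nat) : (i < N)%nat -> mulmv N Sinv (line j t) i = basis_line n j t i.
Proof. intros; apply mulmv_inv_l; auto. Qed.

Lemma line_nonzero (j : nat) (t : Cplx) : (j < n)%nat -> nonzero_vec N (line j t).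
Proof.
  intros Hj. apply (mulmv_nonzero N Sm Sinv); [intros; apply mulmv_inv_l; auto|].
  exists n; split; [lia|]. unfold basis_line, idm. rewrite Nat.eqb_refl.
  destruct (Nat.eqb_spec n j); [lia|]. replace (Cadd C1 (Cmul t C0)) with C1 by ring. apply C1_neq_C0.
Qed.

Lemma line_conj_diag (r : I) (j : nat) (t : Cplx) : (j < n)%nat ->
  proj_eq N (line j (Cmul (Cdiv (p r j) (p r n)) t)) (mulmv N (conj_diag N Sm Sinv (p r)) (line j t)).
Proof.
  intros Hj. exists (p r n); split; [apply Hp; lia|]. intros i Hi.
  rewrite mulmv_conj_diag. unfold line.
  rewrite (mulmv_ext N Sm _ (fun k => Cmul (p r n) (basis_line n j (Cmul (Cdiv (p r j) (p r n)) t) k))),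
    mulmv_mull; [reflexivity|].
  intros k Hk. rewrite mulmv_inv_l by auto. apply basis_line_diag; [lia|apply Hp; lia].
Qed.

Lemma line_chart_coord (j : nat) (t : Cplx) (w : vec) : (j < n)%nat -> proj_eq N (line j t) w ->
  mulmv N Sinv w n <> C0 /\ Cdiv (mulmv N Sinv w j) (mulmv N Sinv w n) = t.
Proof.
  intros Hj [l [Hl E]]. rewrite (mulmv_ext N Sinv w (fun k => Cmul l (line j t k))) by auto.
  rewrite mulmv_mull, !Sinv_line by lia. unfold basis_line, idm. rewrite !Nat.eqb_refl.
  destruct (Nat.eqb_spec n j), (Nat.eqb_spec j n); try lia.
  split; [replace (Cmul l (Cadd C1 (Cmul t C0))) with l by ring; auto|]. field; auto.
Qed.

Variable m : nat.
Hypothesis Hm : (m < N)%nat.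
Hypothesis HFm : mulmv N Tinv (F (mulmv N Sm (fun k => idm k n))) m <> C0.

Lemma line_image_scale (r : I) (j : nat) (t : Cplx) : (j < n)%nat ->
  exists c, c <> C0 /\ forall i, (i < N)%nat ->
    mulmv N Tinv (F (line j (Cmul (Cdiv (p r j) (p r n)) t))) i
    = Cmul c (Cmul (q r i) (mulmv N Tinv (F (line j t)) i)).
Proof.
  intros Hj. destruct HFG as [[_ HPF] _].
  assert (Hnz := line_nonzero j (Cmul (Cdiv (p r j) (p r n)) t) Hj).
  destruct (proj_eq_trans _ _ _ _ (proj_eq_sym _ _ _ (Hcomm r _ (line_nonzero j t Hj)))
              (proj_eq_sym _ _ _ (HPF _ _ Hnz (line_conj_diag r j t Hj)))) as [c [Hc E]].
  exists c; split; auto. intros i Hi.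
  rewrite (mulmv_ext N Tinv _ (fun k => Cmul c (mulmv N (conj_diag N Tm Tinv (q r)) (F (line j t)) k)))
    by auto.
  rewrite mulmv_mull, mulmv_inv_conj_diag by auto. reflexivity.
Qed.

Definition image_coords (j : nat) (t : Cplx) : vec := mulmv N Tinv (F (line j t)).

Lemma tangent_eigen (j : nat) (y : Cplx -> vec) (A : vec) : (j < n)%nat ->
  (forall i, deriv0 (fun t => y t i) (A i)) ->
  near0 (fun t => image_coords j t m <> C0 /\
                  forall i, y t i = Cdiv (image_coords j t i) (image_coords j t m)) ->
  forall r i, (i < N)%nat ->
    Cmul (A i) (Cdiv (p r j) (p r n)) = Cmul (Cdiv (q r i) (q r m)) (A i).
Proof.
  intros Hj Hy Hgood r i Hi. set (d := Cdiv (p r j) (p r n)).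
  apply (deriv0_unique (fun t => y (Cmul d t) i)); [apply (deriv0_scale (fun t => y t i)); auto|].
  apply (deriv0_near (fun t => Cmul (Cdiv (q r i) (q r m)) (y t i))); [|apply deriv0_mull; auto].
  eapply near0_impl; [|apply (near0_and _ _ Hgood (near0_scale _ d Hgood))].
  intros t [[Hm1 Hy1] [_ Hy2]]. rewrite Hy1, Hy2. unfold image_coords.
  destruct (line_image_scale r j t Hj) as [c [Hc E]]. rewrite !E by auto.
  assert (q r m <> C0) by (apply Hq; lia).
  field; auto.
Qed.

(* If the image of the line had zero tangent, so would its image under G,
   which is the line itself. *)
Lemma tangent_nonzero (j : nat) (y : Cplx -> vec) (A : vec) : (j < n)%nat ->
  (forall i, deriv0 (fun t => y t i) (A i)) ->
  near0 (fun t => image_coords j t m <> C0 /\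
                  forall i, y t i = Cdiv (image_coords j t i) (image_coords j t m)) ->
  exists i, (i < N)%nat /\ A i <> C0.
Proof.
  intros Hj Hy Hgood. apply NNPP; intros Hno.
  destruct HFG as [HPF [HPG [HGF [_ [_ HHG]]]]].
  set (rho := fun t => mulmv N Tm (y t)).
  assert (Hrho : forall k, (k < N)%nat -> deriv0 (fun t => rho t k) C0).
  { intros k Hk. replace C0 with (Csum N (fun l => Cmul (Tm k l) (A l))).
    - apply (deriv0_Csum N (fun l t => Cmul (Tm k l) (y t l))). intros; apply deriv0_mull; auto.
    - apply Csum_zero. intros l Hl. replace (A l) with C0; [ring|].
      apply NNPP; intros Hl'. apply Hno. exists l; auto. }
  assert (HrhoF : near0 (fun t => proj_eq N (F (line j t)) (rho t))).
  { eapply near0_impl; [|apply Hgood]. intros t [Hm1 Hy1].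
    exists (Cinv (image_coords j t m)); split; [apply Cinv_neq0; auto|]. intros k Hk.
    unfold rho. rewrite (mulmv_ext N Tm _ (fun l => Cdiv (image_coords j t l) (image_coords j t m)))
      by (intros; apply Hy1).
    rewrite mulmv_div. unfold image_coords. rewrite mulmv_inv_r by auto. unfold Cdiv; ring. }
  assert (HGrho : near0 (fun t => proj_eq N (line j t) (G (rho t)))).
  { eapply near0_impl; [|apply HrhoF]. intros t Ht.
    apply (proj_eq_trans _ _ _ _ (HGF _ (line_nonzero j t Hj))).
    apply (proj2 HPG); auto. apply (proj1 HPF), line_nonzero; auto. }
  destruct (line_chart_coord j C0 _ Hj (near0_at0 _ HGrho)) as [Hn0 _].
  destruct (proj_map_curve_coords N G Sinv rho (fun _ => C0) n HPG HHG) as [z [Z [Hz [HZ Hnear]]]];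
    auto.
  { apply (nonzero_vec_proj_eq N (F (line j C0))); [apply (proj1 HPF), line_nonzero; auto|].
    apply (near0_at0 _ HrhoF). }
  apply C1_neq_C0. rewrite <- (HZ (fun _ _ => eq_refl) j).
  apply (deriv0_unique (fun t => t)); [apply deriv0_id|].
  apply (deriv0_near (fun t => z t j)); auto.
  eapply near0_impl; [|apply (near0_and _ _ Hnear HGrho)].
  intros t [[_ Hzt] Ht]. rewrite Hzt. apply (line_chart_coord j t); auto.
Qed.

Lemma ratio_match (j : nat) : (j < n)%nat ->
  exists i, (i < N)%nat /\ forall r, Cdiv (q r i) (q r m) = Cdiv (p r j) (p r n).
Proof.
  intros Hj. destruct HFG as [HPF [_ [_ [_ [HHF _]]]]].
  destruct (proj_map_curve_coords N F Tinv (line j) (fun k => mulmv N Sm (fun l => idm l j) k) m HPF HHF)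
    as [y [A [Hy [_ Hgood]]]].
  - apply line_nonzero; auto.
  - intros k Hk. apply deriv0_mulmv_affine.
  - unfold line. rewrite (mulmv_ext N Sm _ (fun k => idm k n)); auto. intros; unfold basis_line; ring.
  - destruct (tangent_nonzero j y A Hj Hy Hgood) as [i [Hi HAi]].
    exists i; split; auto. intros r. pose proof (tangent_eigen j y A Hj Hy Hgood r i Hi) as E.
    assert (p r n <> C0) by (apply Hp; lia). assert (q r m <> C0) by (apply Hq; lia).
    replace (Cdiv (q r i) (q r m)) with (Cdiv (Cmul (Cdiv (q r i) (q r m)) (A i)) (A i))
      by (field; auto).
    rewrite <- E. field; auto.
Qed.

End Necessity.


Lemma Cln_C1 : Cln C1 = C0.
Proof.
  unfold Cln, Cabs, Arg, Cnorm2; simpl. rewrite Rmult_1_l, Rmult_0_l, Rplus_0_r, sqrt_1, ln_1.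
  destruct (Rlt_dec 0 1); [|lra]. unfold Rdiv; rewrite Rmult_0_l, atan_0. reflexivity.
Qed.

Lemma simple_set_Cln (n : nat) (lam : nat -> Cplx) : simple_set n (fun k => Cln (lam k)) ->
  (forall k, (k < n)%nat -> lam k <> C1) /\
  (forall k l, (k < n)%nat -> (l < n)%nat -> lam k = lam l -> k = l).
Proof.
  intros [Hnz Hratio]. split.
  - intros k Hk E. apply (Hnz k Hk). cbv beta. rewrite E. apply Cln_C1.
  - intros k l Hk Hl E. destruct (Nat.eq_dec k l) as [|Hkl]; auto. exfalso.
    destruct (Hratio k l Hk Hl Hkl 1%nat ltac:(lia)) as [Hs _]. apply Hs. cbv beta.
    rewrite E. replace (RtoC (INR 1)) with C1 by reflexivity.
    field. rewrite <- E. apply (Hnz k Hk).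
Qed.

Lemma ratio_match_perm (n : nat) (I : Type) (p q : I -> nat -> Cplx) (r0 : I) (m : nat) (tau : nat -> nat) :
  (m < Datatypes.S n)%nat -> (forall r, q r m <> C0) ->
  (forall r, simple_set n (fun k => Cln (Cdiv (p r k) (p r n)))) ->
  (forall j, (j < n)%nat -> (tau j < Datatypes.S n)%nat /\
                          forall r, Cdiv (q r (tau j)) (q r m) = Cdiv (p r j) (p r n)) ->
  exists rho : nat -> nat, is_perm (Datatypes.S n) rho /\
    forall (r : I) (k : nat), (k < n)%nat -> Cdiv (q r (rho k)) (q r (rho n)) = Cdiv (p r k) (p r n).
Proof.
  intros Hm Hqm Hsp Htau.
  set (rho := fun k => if Nat.ltb k n then tau k else m).
  assert (Hrho : forall k, (k < n)%nat -> rho k = tau k).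
  { intros k Hk; unfold rho; destruct (Nat.ltb_spec k n); lia || reflexivity. }
  assert (Hrhon : rho n = m) by (unfold rho; destruct (Nat.ltb_spec n n); lia || reflexivity).
  exists rho. split; [split|].
  - intros k Hk. destruct (Nat.lt_ge_cases k n); [rewrite Hrho by auto; apply Htau; auto|].
    replace k with n by lia. rewrite Hrhon; auto.
  - destruct (simple_set_Cln n _ (Hsp r0)) as [Hne1 Hinj].
    assert (Hnot_m : forall k, (k < n)%nat -> tau k <> m).
    { intros k Hk E. apply (Hne1 k Hk). rewrite <- (proj2 (Htau k Hk) r0), E. field; auto. }
    intros k l Hk Hl E.
    destruct (Nat.lt_ge_cases k n), (Nat.lt_ge_cases l n); try lia.
    + rewrite !Hrho in E by auto. apply Hinj; auto.
      rewrite <- (proj2 (Htau k H) r0), <- (proj2 (Htau l H0) r0), E. reflexivity.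
    + exfalso. replace l with n in E by lia. rewrite Hrho, Hrhon in E by auto. apply (Hnot_m k); auto.
    + exfalso. replace k with n in E by lia. rewrite Hrhon, Hrho in E by auto. symmetry in E. apply (Hnot_m l); auto.
  - intros r k Hk. rewrite Hrho, Hrhon by auto. apply Htau; auto.
Qed.

Lemma necessity (n : nat) (I : Type) (Sm Sinv Tm Tinv : mat) (p q : I -> nat -> Cplx) (F G : vec -> vec) :
  mat_inverse (Datatypes.S n) Sm Sinv -> mat_inverse (Datatypes.S n) Tm Tinv ->
  (forall r k, (k <= n)%nat -> p r k <> C0) -> (forall r k, (k <= n)%nat -> q r k <> C0) ->
  (forall r, simple_set n (fun k => Cln (Cdiv (p r k) (p r n)))) ->
  biholo_proj (Datatypes.S n) F G ->
  (forall r v, nonzero_vec (Datatypes.S n) v ->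
     proj_eq (Datatypes.S n) (F (mulmv (Datatypes.S n) (conj_diag (Datatypes.S n) Sm Sinv (p r)) v))
       (mulmv (Datatypes.S n) (conj_diag (Datatypes.S n) Tm Tinv (q r)) (F v))) ->
  exists rho : nat -> nat, is_perm (Datatypes.S n) rho /\
    forall (r : I) (k : nat), (k < n)%nat -> Cdiv (q r (rho k)) (q r (rho n)) = Cdiv (p r k) (p r n).
Proof.
  intros HS HT Hp Hq Hsp HFG Hcomm.
  destruct (classic (inhabited I)) as [[r0]|HI].
  2:{ exists (fun k => k). repeat split; auto. intros r; exfalso; apply HI; constructor; exact r. }
  assert (Hx : nonzero_vec (Datatypes.S n) (mulmv (Datatypes.S n) Sm (fun k => idm k n))).
  { apply (mulmv_nonzero _ Sm Sinv); [intros; rewrite mulmv_inv_l by auto; reflexivity|].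
    exists n; split; [lia|]. unfold idm; rewrite Nat.eqb_refl. apply C1_neq_C0. }
  destruct (mulmv_nonzero (Datatypes.S n) Tinv Tm (F (mulmv (Datatypes.S n) Sm (fun k => idm k n))))
    as [m [Hm HFm]]; [intros; apply mulmv_inv_r; auto|apply (proj1 (proj1 HFG)); auto|].
  destruct (bounded_choice 0%nat n (fun j i => (i < Datatypes.S n)%nat /\
                                    forall r, Cdiv (q r i) (q r m) = Cdiv (p r j) (p r n)))
    as [tau Htau].
  { intros j Hj. apply (ratio_match n I Sm Sinv Tm Tinv p q F G); auto. }
  apply (ratio_match_perm n I p q r0 m tau); auto. intros r; apply Hq; lia.
Qed.

Theorem theorem6p8 (n : nat) (Hn : (1 < n)%nat) (I : Type)
  (S Sinv T Tinv : mat) (p q : I -> nat -> Cplx)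
  (HS : mat_inverse (Datatypes.S n) S Sinv)
  (HT : mat_inverse (Datatypes.S n) T Tinv)
  (Hp : forall r k, (k <= n)%nat -> p r k <> C0)
  (Hq : forall r k, (k <= n)%nat -> q r k <> C0)
  (Hsp : forall r, simple_set n (fun k => Cln (Cdiv (p r k) (p r n))))
  (Hsq : forall r, simple_set n (fun k => Cln (Cdiv (q r k) (q r n)))) :
  (exists F G : vec -> vec,
     biholo_proj (Datatypes.S n) F G /\
     forall (r : I) (v : vec), nonzero_vec (Datatypes.S n) v ->
       proj_eq (Datatypes.S n)
         (F (mulmv (Datatypes.S n) (conj_diag (Datatypes.S n) S Sinv (p r)) v))
         (mulmv (Datatypes.S n) (conj_diag (Datatypes.S n) T Tinv (q r)) (F v)))
  <->
  (exists rho : nat -> nat, is_perm (Datatypes.S n) rho /\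
     forall (r : I) (k : nat), (k < n)%nat ->
       Cdiv (q r (rho k)) (q r (rho n)) = Cdiv (p r k) (p r n)).
Proof.
  split.
  - intros [F [G [HFG Hcomm]]]. apply (necessity n I S Sinv T Tinv p q F G); auto.
  - intros [rho [Hrho Hratio]]. apply (sufficiency n I S Sinv T Tinv p q rho); auto.
Qed.
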